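(* Let $G^\dagger=(V^\dagger,E^\dagger)$ be a graph whose vertex set is partitioned into ''blossom'' vertices and ''non-blossom'' vertices, and let $w^\dagger\in\mathbb{R}^{|E^\dagger|}$. Consider the LP: minimize $w^\dagger\cdot x$ subject to $\sum_{e\in\delta(v)}x_e=1$ for every non-blossom vertex $v\in V^\dagger$, $\sum_{e\in\delta(v)}x_e\ge 1$ for every blossom vertex $v\in V^\dagger$, and $x\in[0,1]^{|E^\dagger|}$. If this LP is feasible, then it has an optimal solution $x^*\in\{0,\tfrac12,1\}^{|E^\dagger|}$ such that the set of edges $e$ with $x^*_e=\tfrac12$ forms a collection of vertex-disjoint odd cycles.
   Context: $\delta(v)$ denotes the set of edges of $G^\dagger$ incident to $v$. *)

From HB Require Import structures.
From mathcomp Require Import all_boot all_order all_algebra.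
From mathcomp Require Import reals.
Set Implicit Arguments. Unset Strict Implicit. Unset Printing Implicit Defensive.
Import Order.TTheory GRing.Theory Num.Theory.
Local Open Scope ring_scope.

Definition simple_graph (V : finType) (E : {set {set V}}) : Prop :=
  forall e, e \in E -> #|e| = 2%N.

(* LP weights / points are functions on edges; only their values on E matter. *)
Definition lp_cost (R : realType) (V : finType) (E : {set {set V}})
  (w x : {set V} -> R) : R := \sum_(e in E) w e * x e.

Definition deg_sum (R : realType) (V : finType) (E : {set {set V}})
  (x : {set V} -> R) (v : V) : R := \sum_(e in E | v \in e) x e.

Definition lp_feasible (R : realType) (V : finType) (E : {set {set V}})
  (blossom : {set V}) (x : {set V} -> R) : Prop :=
  [/\ forall v, v \notin blossom -> deg_sum E x v = 1,
      forall v, v \in blossom -> 1 <= deg_sum E x v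
    & forall e, e \in E -> 0 <= x e <= 1].

Definition lp_optimal (R : realType) (V : finType) (E : {set {set V}})
  (blossom : {set V}) (w x : {set V} -> R) : Prop :=
  lp_feasible E blossom x /\
  forall y, lp_feasible E blossom y -> lp_cost E w x <= lp_cost E w y.

(* Edge set of the cycle v_0 v_1 ... v_{m-1} v_0 given by the sequence s. *)
Definition cycle_edges (V : finType) (s : seq V) : {set {set V}} :=
  [set [set p.1; p.2] | p in zip s (rot 1 s)].

Definition odd_cycle_seq (V : finType) (s : seq V) : bool :=
  [&& uniq s, (3 <= size s)%N & odd (size s)].

Definition disjoint_odd_cycles (V : finType) (F : {set {set V}}) : Prop :=
  exists cs : seq (seq V),
    [/\ all (@odd_cycle_seq V) cs,
        uniq (flatten cs)
      & F = \bigcup_(c <- cs) cycle_edges c].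

From HB Require Import structures.
From mathcomp Require Import all_boot all_order all_algebra.
From mathcomp Require Import reals boolp.
From mathcomp Require Import zify ring lra.
Set Implicit Arguments. Unset Strict Implicit. Unset Printing Implicit Defensive.
Import Order.TTheory GRing.Theory Num.Theory.

(* Every feasible point can be moved, without increasing the cost, to an extreme
   point: as long as some nonzero direction d, supported on the fractional edges,
   keeps every tight vertex constraint tight, move along d or -d (whichever does
   not increase the cost) until a new bound becomes tight, which strictly
   decreases the number of fractional edges plus slack vertices.
   At an extreme point y, let F be the set of fractional edges. A rank argument
   gives |F| <= the number of tight vertices meeting F; each of them meets at
   least two edges of F, since a degree sum equal to 1 cannot contain exactly one
   fractional term. Double counting then shows that every vertex meeting F is
   tight and meets exactly two edges of F. Hence y - 1/2 on F is an admissible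
   direction, so y = 1/2 on F, and F is 2-regular, i.e. a disjoint union of
   cycles; an even one would carry the admissible direction +1, -1, +1, ...
   Finally, such half-integral points take finitely many values on the edges,
   and a cheapest one is optimal. *)

Definition edges_at (V : finType) (F : {set {set V}}) (v : V) : {set {set V}} :=
  [set e in F | v \in e].

Definition next_idx (m i : nat) := if i.+1 < m then i.+1 else 0.
Definition prev_idx (m j : nat) := if j == 0 then m.-1 else j.-1.

Lemma next_idx_lt m i : 0 < m -> next_idx m i < m.
Proof. by rewrite /next_idx; case: ifP. Qed.

Lemma prev_idx_lt m j : j < m -> prev_idx m j < m.
Proof. by rewrite /prev_idx; case: ifP => ?; lia. Qed.

Lemma next_idx_eq m i j : i < m -> j < m -> (next_idx m i == j) = (i == prev_idx m j).
Proof. by rewrite /next_idx /prev_idx => ? ?; do 2 case: ifP => ?; lia. Qed.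

Lemma prev_idx_neq m j : 1 < m -> j < m -> (j == prev_idx m j) = false.
Proof. by rewrite /prev_idx => ? ?; case: ifP => ?; lia. Qed.

Lemma odd_prev_idx m j : ~~ odd m -> j < m -> odd (prev_idx m j) = ~~ odd j.
Proof. by rewrite /prev_idx => m_even lt_j; case: eqP => [->|/eqP]; lia. Qed.

Section CycleEdges.
Variables (V : finType) (x0 : V).

Definition cycle_edge (c : seq V) i := [set nth x0 c i; nth x0 c (next_idx (size c) i)].

Lemma nth_rot1 (c : seq V) i : i < size c ->
  nth x0 (rot 1 c) i = nth x0 c (next_idx (size c) i).
Proof.
case: c => [|a t] //= lt_i; rewrite rot1_cons nth_rcons /next_idx /= ltnS.
by case: ifP => // ?; have -> : i == size t by lia.
Qed.

Lemma cycle_edgesP (c : seq V) e :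
  reflect (exists2 i, i < size c & e = cycle_edge c i) (e \in cycle_edges c).
Proof.
apply: (iffP imsetP) => [[p /(nthP (x0, x0)) [i]]|[i lt_i ->]].
  rewrite size_zip size_rot minnn => lt_i <- ->.
  by exists i; rewrite // nth_zip ?size_rot //= nth_rot1.
exists (nth x0 c i, nth x0 (rot 1 c) i); last by rewrite /= nth_rot1.
by rewrite -nth_zip ?size_rot // mem_nth // size_zip size_rot minnn.
Qed.

Lemma cycle_edge_in (c : seq V) i : i < size c -> cycle_edge c i \in cycle_edges c.
Proof. by move=> lt_i; apply/cycle_edgesP; exists i. Qed.

Lemma mem_cycle_edge (c : seq V) i v : i < size c -> v \in cycle_edge c i -> v \in c.
Proof.
by move=> lt_i; rewrite !inE => /orP[] /eqP ->; rewrite mem_nth ?next_idx_lt //; lia.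
Qed.

Variable c : seq V.
Hypothesis c_uniq : uniq c.

Lemma mem_cycle_edge_nth i j : i < size c -> j < size c ->
  (nth x0 c j \in cycle_edge c i) = (i == j) || (i == prev_idx (size c) j).
Proof.
move=> lt_i lt_j; have lt_ni := @next_idx_lt (size c) i.
rewrite !inE !(eq_sym (nth x0 c j)) !nth_uniq ?lt_ni //; try lia.
by rewrite next_idx_eq // eq_sym.
Qed.

Lemma cycle_edge_inj i j : 3 <= size c -> i < size c -> j < size c ->
  cycle_edge c i = cycle_edge c j -> i = j.
Proof.
move=> c3 lt_i lt_j eq_ij.
have : nth x0 c j \in cycle_edge c i by rewrite eq_ij !inE eqxx.
rewrite mem_cycle_edge_nth // => /orP[/eqP // | /eqP ij].
have : nth x0 c (next_idx (size c) j) \in cycle_edge c i by rewrite eq_ij !inE eqxx orbT.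
rewrite mem_cycle_edge_nth ?next_idx_lt //; last lia.
move: ij; rewrite /prev_idx /next_idx.
by case: (ltnP j.+1 (size c)) => ?; case: (j =P 0) => ? /=; lia.
Qed.

Lemma edges_at_cycle j : 3 <= size c -> j < size c ->
  edges_at (cycle_edges c) (nth x0 c j) =
  [set cycle_edge c j; cycle_edge c (prev_idx (size c) j)].
Proof.
move=> c3 lt_j; have lt_pj := prev_idx_lt lt_j; apply/setP => e; rewrite !inE.
apply/andP/orP => [[/cycle_edgesP [i lt_i ->]]|[]/eqP->]; rewrite ?cycle_edge_in //.
- by rewrite mem_cycle_edge_nth // => /orP[]/eqP->; [left | right].
- by rewrite mem_cycle_edge_nth ?eqxx.
- by rewrite mem_cycle_edge_nth ?eqxx ?orbT.
Qed.

Lemma edges_at_cycle_card j : 3 <= size c -> j < size c ->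
  #|edges_at (cycle_edges c) (nth x0 c j)| = 2.
Proof.
move=> c3 lt_j; rewrite edges_at_cycle // cards2.
suff -> : cycle_edge c j != cycle_edge c (prev_idx (size c) j) by [].
by apply/eqP => /(cycle_edge_inj c3 lt_j (prev_idx_lt lt_j)) /eqP; rewrite prev_idx_neq //; lia.
Qed.

End CycleEdges.

Lemma card_edges_at (V : finType) (F : {set {set V}}) v :
  #|edges_at F v| = \sum_(e in F) (v \in e).
Proof.
rewrite -sum1_card (eq_bigl [pred e | (e \in F) && (v \in e)]) => [|e]; last by rewrite !inE.
by rewrite big_mkcondr; apply: eq_bigr => e _; case: (v \in e).
Qed.

Lemma handshake (V : finType) (F : {set {set V}}) :
  \sum_v #|edges_at F v| = \sum_(e in F) #|e|.
Proof.
rewrite (eq_bigr _ (fun v _ => card_edges_at F v)) exchange_big; apply: eq_bigr => e _.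
by rewrite -sum1_card [RHS]big_mkcond; apply: eq_bigr => v _; case: (v \in e).
Qed.

Definition two_regular (V : finType) (F : {set {set V}}) :=
  simple_graph F /\ forall v, edges_at F v != set0 -> #|edges_at F v| = 2.

Definition sub_cycle (V : finType) (F : {set {set V}}) (c : seq V) :=
  [&& uniq c, 3 <= size c & cycle_edges c \subset F].

Section TwoRegularGraph.
Variables (V : finType) (F : {set {set V}}).
Hypothesis regF : two_regular F.

Lemma edges_at_other e z : e \in F -> z \in e ->
  exists2 f, f != e & edges_at F z = [set e; f].
Proof.
move=> eF ze; have e_at : e \in edges_at F z by rewrite inE eF ze.
have /cards2P [a [b [ab Eab]]] : #|edges_at F z| == 2.
  by rewrite regF.2 //; apply/set0Pn; exists e.
move: e_at; rewrite Eab !inE => /orP[] /eqP ->.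
  by exists b; rewrite // eq_sym.
by exists a; rewrite // setUC.
Qed.

Lemma sub_cycle_closed c v f : sub_cycle F c -> v \in c -> f \in F -> v \in f ->
  f \in cycle_edges c.
Proof.
move=> /and3P [c_uniq c3 cF] vc fF vf; have lt_j : index v c < size c by rewrite index_mem.
have Ev : edges_at (cycle_edges c) v = edges_at F v.
  have := edges_at_cycle_card v c_uniq c3 lt_j; rewrite nth_index // => c2.
  apply/eqP; rewrite eqEcard c2.
  rewrite regF.2; last by apply/set0Pn; exists f; rewrite inE fF vf.
  by rewrite andbT; apply/subsetP => g; rewrite !inE => /andP [/(subsetP cF) -> ->].
have : f \in edges_at F v by rewrite inE fF vf.
by rewrite -Ev inE => /andP [].
Qed.

Section Walk.
Variable x0 : V.

Definition edge_path (s : seq V) := [/\ uniq s, 2 <= size s &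
  forall i, i.+1 < size s -> [set nth x0 s i; nth x0 s i.+1] \in F].

(* The last vertex of the path has a second edge, which either leaves the path
   or closes a cycle. *)
Lemma edge_path_extend s : edge_path s ->
  (exists2 u, u \notin s & edge_path (rcons s u)) \/ exists c, sub_cycle F c.
Proof.
move=> [s_uniq s2 s_path]; set m := size s in s2 s_path.
set z := nth x0 s m.-1; set y := nth x0 s m.-2.
have yzF : [set y; z] \in F.
  by have := s_path m.-2; rewrite (_ : m.-2.+1 = m.-1); [apply; lia | lia].
have zyz : z \in [set y; z] by rewrite !inE eqxx orbT.
have [f fyz Ez] := edges_at_other yzF zyz.
have : f \in edges_at F z by rewrite Ez !inE eqxx orbT.
rewrite inE => /andP [fF zf].
have /cards2P [a [b [ab Eab]]] : #|f| == 2 by rewrite regF.1.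
have [u uz Ef] : exists2 u, u != z & f = [set z; u].
  move: zf; rewrite Eab !inE => /orP[] /eqP ->; first by exists b; rewrite // eq_sym.
  by exists a; rewrite // setUC.
have uy : u != y by apply: contraNneq fyz => uy; rewrite Ef uy setUC.
have [us|uNs] := boolP (u \in s); [right | left].
  set k := index u s; have lt_k : k < m by rewrite index_mem.
  have ku : nth x0 s k = u by rewrite nth_index.
  have k_z : k != m.-1 by apply: contraNneq uz => k_z; rewrite -ku k_z.
  have k_y : k != m.-2 by apply: contraNneq uy => k_y; rewrite -ku k_y.
  exists (drop k s); apply/and3P; split; [exact: drop_uniq | rewrite size_drop; lia |].
  apply/subsetP => e /(cycle_edgesP x0) [i]; rewrite size_drop /cycle_edge size_drop !nth_drop => lt_i ->.
  rewrite /next_idx; case: ifP => lt_i1; first by rewrite addnS s_path //; lia.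
  by rewrite addn0 ku (_ : k + i = m.-1) -?Ef //; lia.
exists u => //; split.
- by rewrite rcons_uniq uNs s_uniq.
- by rewrite size_rcons; lia.
move=> i; rewrite size_rcons ltnS => lt_i; rewrite !nth_rcons.
case: (ltnP i.+1 m) => lt_i1; first by rewrite (ltnW lt_i1) s_path.
have -> : i < m by lia.
have -> : i.+1 == m by apply/eqP; lia.
have -> : i = m.-1 by lia.
by rewrite -Ef.
Qed.

Lemma edge_path_cycle s : edge_path s -> exists c, sub_cycle F c.
Proof.
have [n] := ubnP (#|V| - size s); elim: n s => // n IH s lt_n s_path.
have [[u uNs us_path]|//] := edge_path_extend s_path.
apply: (IH _ _ us_path); case: (us_path) => /card_uniqP us_card _ _.
by have := max_card (mem (rcons s u)); rewrite us_card !size_rcons; lia.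
Qed.

End Walk.

Lemma two_regular_sub_cycle : F != set0 -> exists c, sub_cycle F c.
Proof.
case/set0Pn => e eF; have /cards2P [a [b [ab Eab]]] : #|e| == 2 by rewrite regF.1.
apply: (@edge_path_cycle a [:: a; b]); split => //=; first by rewrite inE andbT.
by case=> [|i] //= _; rewrite -Eab.
Qed.

Lemma two_regular_setD_cycle c : sub_cycle F c ->
  two_regular (F :\: cycle_edges c) /\
  forall v f, f \in F :\: cycle_edges c -> v \in f -> v \notin c.
Proof.
move=> cyc_c; have /and3P [_ _ cF] := cyc_c.
have off_c v f : f \in F :\: cycle_edges c -> v \in f -> v \notin c.
  rewrite inE => /andP [fNc fF] vf; apply: contra fNc => vc.
  exact: sub_cycle_closed vf.
split => //; split=> [e /setDP [eF _]|v]; first exact: regF.1.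
case/set0Pn => f; rewrite inE => /andP [fF' vf]; have vNc := off_c _ _ fF' vf.
have -> : edges_at (F :\: cycle_edges c) v = edges_at F v.
  apply/setP => g; rewrite !inE andbC [RHS]andbC; case vg: (v \in g) => //=.
  rewrite andb_idl // => _; apply: contra vNc => /(cycle_edgesP v) [i lt_i gi].
  by rewrite gi in vg; apply: mem_cycle_edge lt_i vg.
by apply: regF.2; apply/set0Pn; exists f; move: fF'; rewrite !inE vf => /andP [_ ->].
Qed.

End TwoRegularGraph.

Lemma two_regular_cycle_decomposition (V : finType) (F : {set {set V}}) : two_regular F ->
  exists cs : seq (seq V), [/\ all (fun c => uniq c && (3 <= size c)) cs,
    uniq (flatten cs) & F = \bigcup_(c <- cs) cycle_edges c].
Proof.
have [n] := ubnP #|F|; elim: n F => // n IH F ltFn regF.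
have [->|F0] := eqVneq F set0; first by exists [::]; rewrite big_nil.
have [c cyc_c] := two_regular_sub_cycle regF F0.
have /and3P [c_uniq c3 cF] := cyc_c.
have [regF' off_c] := two_regular_setD_cycle regF cyc_c.
have [|cs [cs_cyc cs_uniq F'E]] := IH _ _ regF'.
  have [a _] : exists a, a \in c by case: (c) c3 => [|a t] //; exists a; rewrite inE eqxx.
  have c0 : cycle_edge a c 0 \in cycle_edges c by apply: cycle_edge_in; lia.
  have : F :\: cycle_edges c \proper F.
    apply/properP; split; first exact: subsetDl.
    by exists (cycle_edge a c 0); [exact: (subsetP cF) | rewrite inE c0].
  by move/proper_card; lia.
exists (c :: cs); split.
- by rewrite /= c_uniq c3.
- rewrite /= cat_uniq c_uniq cs_uniq andbT; apply/hasPn => v /flattenP [c' c'cs vc'].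
  have /andP [_ c'3] := allP cs_cyc c' c'cs.
  have e_c' : cycle_edge v c' (index v c') \in F :\: cycle_edges c.
    by rewrite F'E (big_rem c') //= inE cycle_edge_in ?index_mem.
  by apply: (off_c v _ e_c'); rewrite !inE nth_index ?eqxx.
- rewrite big_cons -F'E; apply/setP => e; rewrite !inE.
  by case: (boolP (e \in cycle_edges c)) => [/(subsetP cF) ->|].
Qed.

Local Open Scope ring_scope.

Lemma homogeneous_system_nontrivial (K : fieldType) (I J : finType)
    (S : {set I}) (T : {set J}) (a : J -> I -> K) : (#|T| < #|S|)%N ->
  exists2 x : I -> K, exists i, x i != 0 &
    (forall i, i \notin S -> x i = 0) /\ forall j, j \in T -> \sum_(i in S) a j i * x i = 0.
Proof.
move=> ltTS; have /card_gt0P [i0 i0S] : (0 < #|S|)%N by apply: leq_ltn_trans ltTS.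
pose A : 'M[K]_(#|S|, #|T|) := \matrix_(k, l) a (enum_val l) (enum_val k).
have : ~~ row_free A by rewrite /row_free neq_ltn (leq_ltn_trans (rank_leq_col A) ltTS).
rewrite -kermx_eq0 => /rowV0Pn [u /sub_kermxP uA u0].
pose x i := if i \in S then u 0 (enum_rank_in i0S i) else 0.
have xE k : x (enum_val k) = u 0 k by rewrite /x enum_valP enum_valK_in.
exists x; last split.
- have /existsP [k uk] : [exists k, u 0 k != 0].
    apply: contraNT u0 => /existsPn u_0; apply/eqP/rowP => k.
    by rewrite mxE; apply/eqP; rewrite -[_ == _]negbK u_0.
  by exists (enum_val k); rewrite xE.
- by move=> i /negbTE iNS; rewrite /x iNS.
move=> j jT; rewrite big_enum_val /=.
transitivity ((u *m A) 0 (enum_rank_in jT j)); last by rewrite uA mxE.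
by rewrite mxE; apply: eq_bigr => k _; rewrite xE mxE enum_rankK_in // mulrC.
Qed.

Lemma deg_sum_supported (R : realType) (V : finType) (E F : {set {set V}})
    (d : {set V} -> R) v : F \subset E -> (forall e, e \notin F -> d e = 0) ->
  deg_sum E d v = \sum_(e in edges_at F v) d e.
Proof.
move=> FE dF; rewrite /deg_sum (bigID (mem F)) /= [X in _ + X]big1 ?addr0.
  apply: eq_bigl => e; rewrite !inE.
  by case eF: (e \in F); rewrite ?andbF ?andbT //= (subsetP FE _ eF).
by move=> e /andP [_ /dF].
Qed.

Section AlternatingVector.
Variables (R : realType) (V : finType) (x0 : V) (c : seq V).
Hypotheses (c_uniq : uniq c) (c3 : (3 <= size c)%N).

Definition alt_vector (e : {set V}) : R :=
  \sum_(i < size c | e == cycle_edge x0 c i) (-1) ^+ i.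

Lemma alt_vector_out e : e \notin cycle_edges c -> alt_vector e = 0.
Proof.
move=> eNc; apply: big_pred0 => i; apply: contraNF eNc => /eqP ->.
exact: cycle_edge_in.
Qed.

Lemma alt_vector_edge i : (i < size c)%N -> alt_vector (cycle_edge x0 c i) = (-1) ^+ i.
Proof.
move=> lt_i; rewrite /alt_vector (eq_bigl (pred1 (Ordinal lt_i))) ?big_pred1_eq // => k.
by apply/eqP/eqP => [/(cycle_edge_inj c_uniq c3 lt_i (ltn_ord k)) ik|->]; first exact: val_inj.
Qed.

Lemma alt_vector_deg (E : {set {set V}}) v : ~~ odd (size c) ->
  cycle_edges c \subset E -> deg_sum E alt_vector v = 0.
Proof.
move=> c_even cE; rewrite (deg_sum_supported v cE alt_vector_out).
have [vc|vNc] := boolP (v \in c); last first.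
  rewrite big1 // => e; rewrite inE => /andP [/(cycle_edgesP x0) [i lt_i ->] ve].
  by move: vNc; rewrite (mem_cycle_edge lt_i ve).
have lt_j : (index v c < size c)%N by rewrite index_mem.
rewrite -{1}(nth_index x0 vc) edges_at_cycle // big_setU1 /= ?big_set1; last first.
  by rewrite inE; apply/eqP => /(cycle_edge_inj c_uniq c3 lt_j (prev_idx_lt lt_j)) /eqP;
     rewrite prev_idx_neq //; lia.
rewrite !alt_vector_edge ?prev_idx_lt // -[(-1) ^+ prev_idx _ _]signr_odd.
by rewrite odd_prev_idx // signrN signr_odd subrr.
Qed.

End AlternatingVector.

Section LinearProgram.
Variables (R : realType) (V : finType) (E : {set {set V}}) (blossom : {set V}).
Variable w : {set V} -> R.
Implicit Types (y d : {set V} -> R) (t : R).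

Local Notation feasible := (lp_feasible E blossom).
Local Notation cost := (lp_cost E w).

Definition shift y d t e := y e + t * d e.

Definition frac_edges y := [set e in E | 0 < y e < 1].
Definition tight y v := (v \notin blossom) || (deg_sum E y v == 1).
Definition slack_vertices y := [set v | ~~ tight y v].
Definition potential y := (#|frac_edges y| + #|slack_vertices y|)%N.

Definition admissible y d :=
  (forall e, e \notin frac_edges y -> d e = 0) /\ forall v, tight y v -> deg_sum E d v = 0.

Definition extreme y := forall d, admissible y d -> forall e, d e = 0.

Lemma deg_sum_shift y d t v : deg_sum E (shift y d t) v = deg_sum E y v + t * deg_sum E d v.
Proof. by rewrite /deg_sum big_split /= mulr_sumr. Qed.

Lemma lp_cost_shift y d t : cost (shift y d t) = cost y + t * cost d.
Proof. by rewrite /lp_cost mulr_sumr -big_split; apply: eq_bigr => e _; rewrite /shift mulrDr mulrCA. Qed.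

Lemma admissibleN y d : admissible y d -> admissible y (fun e => - d e).
Proof.
move=> [dF dT]; split=> [e /dF -> | v /dT dv]; first by rewrite oppr0.
by rewrite /deg_sum sumrN -/(deg_sum E d v) dv oppr0.
Qed.

Lemma tight_deg_sum y v : feasible y -> tight y v -> deg_sum E y v = 1.
Proof. by case=> y_nb _ _ /orP[/y_nb | /eqP]. Qed.

Section Step.
Variables (y d : {set V} -> R).
Hypotheses (y_feas : feasible y) (d_adm : admissible y d).

(* The constraints that a move along [d] can violate, and how far one may move
   before each of them becomes tight. *)
Definition blocking (i : {set V} + V) :=
  match i with
  | inl e => (e \in frac_edges y) && (d e != 0)
  | inr v => (v \in slack_vertices y) && (deg_sum E d v < 0)
  end.

Definition step_bound (i : {set V} + V) :=
  match i with
  | inl e => if 0 < d e then (1 - y e) / d e else y e / - d e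
  | inr v => (deg_sum E y v - 1) / - deg_sum E d v
  end.

Lemma frac_edge_of_support e : d e != 0 -> e \in frac_edges y.
Proof. by case: d_adm => dF _ de; apply: contraR de => /dF ->. Qed.

Lemma step_bound_ge0 i : blocking i -> 0 <= step_bound i.
Proof.
case: y_feas => _ y_b _; case: i => [e|v] /=.
  rewrite inE => /andP [/and3P [_ y0 y1] de].
  by case: ifP => dp; apply: divr_ge0; rewrite ?oppr_ge0; lra.
rewrite inE negb_or negbK => /andP [/andP [vb _] dv].
by apply: divr_ge0; have := y_b v vb; lra.
Qed.

Lemma tight_shift t v : tight y v -> tight (shift y d t) v.
Proof.
by move=> tv; have := tv; rewrite /tight deg_sum_shift d_adm.2 // mulr0 addr0.
Qed.

Lemma shift_feasible t : 0 <= t -> (forall i, blocking i -> t <= step_bound i) ->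
  feasible (shift y d t).
Proof.
case: y_feas d_adm => y_nb y_b y_01 [dF dT] t0 t_le.
have deg_tight v : tight y v -> deg_sum E (shift y d t) v = deg_sum E y v.
  by move/dT; rewrite deg_sum_shift => ->; rewrite mulr0 addr0.
split.
- by move=> v vb; rewrite deg_tight ?y_nb // /tight vb.
- move=> v vb; have [tv|sv] := boolP (tight y v); first by rewrite deg_tight // y_b.
  rewrite deg_sum_shift; have := y_b v vb.
  have [dv0|dvn] := lerP 0 (deg_sum E d v); first by have := mulr_ge0 t0 dv0; lra.
  have := t_le (inr v); rewrite /= inE sv dvn => /(_ isT).
  by rewrite ler_pdivlMr ?oppr_gt0 //; lra.
move=> e eE; rewrite /shift.
have [-> | de] := eqVneq (d e) 0; first by rewrite mulr0 addr0 y_01.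
have eF := frac_edge_of_support de; move: (eF); rewrite inE => /and3P [_ y0 y1].
have := t_le (inl e); rewrite /= eF de => /(_ isT).
case: ifP => dp.
  by rewrite ler_pdivlMr // => ?; have ? := mulr_ge0 t0 (ltW dp); apply/andP; split; lra.
have dn : d e < 0 by rewrite lt_neqAle de leNgt dp.
rewrite ler_pdivlMr ?oppr_gt0 // => ?; have ? : 0 <= t * - d e by rewrite mulr_ge0 // oppr_ge0 ltW.
by apply/andP; split; lra.
Qed.

Lemma potential_shift_lt i : blocking i -> (potential (shift y d (step_bound i)) < potential y)%N.
Proof.
have sub_frac t : frac_edges (shift y d t) \subset frac_edges y.
  apply/subsetP => e; apply: contraTT => eNF.
  by rewrite !inE /shift d_adm.1 // mulr0 addr0; rewrite inE in eNF.
have sub_slack t : slack_vertices (shift y d t) \subset slack_vertices y.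
  by apply/subsetP => v; rewrite !inE; apply: contra; apply: tight_shift.
rewrite /potential; case: i => [e|v] /andP [iF di].
  suff /proper_card : frac_edges (shift y d (step_bound (inl e))) \proper frac_edges y.
    by have := subset_leq_card (sub_slack (step_bound (inl e))); lia.
  apply/properP; split => //; exists e => //.
  move: (iF); rewrite !inE /shift /= => /andP [-> /andP [y0 y1]] /=.
  case: ifP => dp; first by rewrite divfK ?lt0r_neq0 // subrKC ltxx andbF.
  by rewrite (_ : y e / - d e * d e = - y e) ?subrr ?ltxx //; field.
suff /proper_card : slack_vertices (shift y d (step_bound (inr v))) \proper slack_vertices y.
  by have := subset_leq_card (sub_frac (step_bound (inr v))); lia.
apply/properP; split => //; exists v => //.
rewrite inE negbK /tight deg_sum_shift /=; apply/orP; right; apply/eqP; field.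
by rewrite lt_eqF.
Qed.

End Step.

Lemma descent_step y d e0 : feasible y -> admissible y d -> d e0 != 0 -> cost d <= 0 ->
  exists y', [/\ feasible y', cost y' <= cost y & (potential y' < potential y)%N].
Proof.
move=> y_feas d_adm de0 cd.
have b0 : blocking y d (inl e0) by rewrite /= (frac_edge_of_support d_adm de0).
have [i bi i_min] := arg_minP (step_bound y d) b0.
exists (shift y d (step_bound y d i)); split.
- exact: shift_feasible (step_bound_ge0 y_feas bi) i_min.
- by rewrite lp_cost_shift; have := mulr_ge0_le0 (step_bound_ge0 y_feas bi) cd; lra.
- exact: potential_shift_lt.
Qed.

Lemma extreme_below y : feasible y -> exists2 y', feasible y' /\ extreme y' & cost y' <= cost y.
Proof.
have [n] := ubnP (potential y); elim: n y => // n IH y lt_n y_feas.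
have [[d [e0 [d_adm de0]]] | none] := pselect (exists d e0, admissible y d /\ d e0 != 0); last first.
  exists y => //; split=> // d d_adm e.
  by have [//|de] := eqVneq (d e) 0; case: none; exists d, e.
have [y' [y'_feas cy' lt_y']] : exists y', [/\ feasible y', cost y' <= cost y & (potential y' < potential y)%N].
  have [cd|cd] := lerP (cost d) 0; first exact: descent_step d_adm de0 cd.
  apply: (descent_step y_feas (admissibleN d_adm) (e0 := e0)); first by rewrite oppr_eq0.
  suff -> : cost (fun e => - d e) = - cost d by lra.
  by rewrite /lp_cost -sumrN; apply: eq_bigr => e _; rewrite mulrN.
have [z [z_feas z_ext] czy'] := IH y' ltac:(lia) y'_feas.
by exists z => //; apply: le_trans czy' cy'.
Qed.

End LinearProgram.

Section ExtremePoint.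
Variables (R : realType) (V : finType) (E : {set {set V}}) (blossom : {set V}).
Hypothesis E_simple : simple_graph E.
Variable y : {set V} -> R.
Hypotheses (y_feas : lp_feasible E blossom y) (y_ext : extreme E blossom y).

Local Notation F := (frac_edges E y).
Local Notation tight := (tight E blossom y).

Lemma frac_edges_sub : F \subset E.
Proof. by apply/subsetP => e; rewrite inE => /andP []. Qed.

Lemma value_off_frac e : e \in E -> e \notin F -> y e = (y e == 1)%:R.
Proof.
case: y_feas => _ _ y_01 eE; have /andP [y0 y1] := y_01 e eE.
rewrite inE eE /= negb_and -!leNgt => /orP [] ?.
  by rewrite (_ : y e = 0) 1?eq_sym ?oner_eq0 //; lra.
by rewrite (_ : y e = 1) ?eqxx //; lra.
Qed.

Lemma deg_sum_frac_nat v : exists k : nat, deg_sum E y v = \sum_(e in edges_at F v) y e + k%:R.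
Proof.
exists (\sum_(e | (e \in E) && (v \in e) && (e \notin F)) (y e == 1%R))%N.
rewrite natr_sum /deg_sum (bigID (mem F)) /=; congr (_ + _).
  apply: eq_bigl => e; rewrite [RHS]inE.
  case: (boolP (e \in F)) => [eF|]; rewrite ?andbF ?andbT //=.
  by rewrite (subsetP frac_edges_sub _ eF).
by apply: eq_bigr => e /andP [/andP [eE _] eNF]; apply: value_off_frac.
Qed.

Lemma frac_edges_at_neq1 v : tight v -> #|edges_at F v| != 1%N.
Proof.
move=> /(tight_deg_sum y_feas); have [k ->] := deg_sum_frac_nat v.
move=> deg1; apply/negP => /cards1P [e Ee]; move: deg1; rewrite Ee big_set1.
have : e \in edges_at F v by rewrite Ee inE.
rewrite !inE => /andP [/and3P [_ y0 y1] _].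
by case: k => [|k]; [rewrite addr0 | rewrite -natr1; have := ler0n R k]; lra.
Qed.

Definition frac_tight_vertices := [set v | tight v & edges_at F v != set0].

(* Otherwise the incidence system of the fractional edges against these tight
   vertices has a nonzero solution, which is an admissible direction. *)
Lemma card_frac_edges_le : (#|F| <= #|frac_tight_vertices|)%N.
Proof.
rewrite leqNgt; apply/negP => ltTF.
have [d [e0 de0] [dF dT]] := homogeneous_system_nontrivial (fun (v : V) (e : {set V}) => (v \in e)%:R : R) ltTF.
move/negP: de0; apply; apply/eqP; apply: y_ext; split=> // v tv.
rewrite (deg_sum_supported v frac_edges_sub dF).
have [->|nv] := eqVneq (edges_at F v) set0; first by rewrite big_set0.
rewrite -[RHS](dT v); last by rewrite inE tv nv.
rewrite (eq_bigl [pred e | (e \in F) && (v \in e)]) => [|e]; last by rewrite [LHS]inE.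
by rewrite big_mkcondr; apply: eq_bigr => e _; case: (v \in e); rewrite ?mul1r ?mul0r.
Qed.

(* Double counting: each tight vertex meeting F meets at least two of its
   edges, each other vertex meeting F at least one, and the degrees sum to 2|F|. *)
Lemma frac_edges_at_tight_deg2 v : edges_at F v != set0 ->
  tight v /\ #|edges_at F v| = 2%N.
Proof.
pose T := frac_tight_vertices; pose S := [set v | ~~ tight v & edges_at F v != set0].
pose lb v := (2 * (v \in T) + (v \in S))%N.
have lb_le u : (lb u <= #|edges_at F u|)%N.
  rewrite /lb !inE; have [-> | nu] := eqVneq (edges_at F u) set0; first by rewrite !andbF.
  have : (0 < #|edges_at F u|)%N by rewrite card_gt0.
  rewrite /= !andbT; have := frac_edges_at_neq1 (v := u).
  by case: (tight u) => /= [/(_ isT) | _]; lia.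
have card_ind (A : {set V}) : (\sum_u (u \in A) = #|A|)%N.
  by rewrite -sum1_card [RHS]big_mkcond; apply: eq_bigr => u _; case: (u \in A).
have sum_deg : (\sum_u #|edges_at F u| = 2 * #|F|)%N.
  rewrite handshake (eq_bigr (fun _ => 2%N)) ?sum_nat_const 1?mulnC // => e eF.
  exact/E_simple/(subsetP frac_edges_sub).
have sum_lb : (\sum_u lb u = 2 * #|T| + #|S|)%N.
  by rewrite big_split /= -big_distrr /= !card_ind.
have [le_sum eq_sum] := leqif_sum (fun u (_ : true) => leqif_eq (lb_le u)).
rewrite sum_deg sum_lb in le_sum eq_sum; have := card_frac_edges_le; rewrite -/T => leFT.
have S0 : S = set0 by apply/cards0_eq; lia.
have /forall_inP lb_eq : [forall (u | true), lb u == #|edges_at F u|].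
  by rewrite -eq_sum; apply/eqP; lia.
move=> nv; have /eqP := lb_eq v isT.
have tv : tight v.
  by apply: contraT => ntv; move/setP/(_ v): S0; rewrite !inE ntv nv.
by rewrite /lb !inE tv nv /= => <-.
Qed.


Lemma frac_edges_at_sum v : edges_at F v != set0 -> \sum_(e in edges_at F v) y e = 1.
Proof.
move=> nv; have [tv /eqP/cards2P [a [b [ab Eab]]]] := frac_edges_at_tight_deg2 nv.
have pos f : f \in edges_at F v -> 0 < y f by rewrite !inE => /andP [/and3P [_ ->]].
have ya : 0 < y a by apply: pos; rewrite Eab !inE eqxx.
have yb : 0 < y b by apply: pos; rewrite Eab !inE eqxx orbT.
have [k] := deg_sum_frac_nat v; rewrite (tight_deg_sum y_feas tv) Eab.
rewrite big_setU1 ?inE // big_set1 /=.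
by case: k => [|k]; [rewrite addr0 | rewrite -natr1; have := ler0n R k]; lra.
Qed.

Lemma frac_half e : e \in F -> y e = 2^-1.
Proof.
pose d f := if f \in F then y f - 2^-1 else 0.
have d_supp f : f \notin F -> d f = 0 by rewrite /d => /negbTE ->.
have : d e = 0.
  apply: y_ext; split=> // v tv; rewrite (deg_sum_supported v frac_edges_sub d_supp).
  have [->|nv] := eqVneq (edges_at F v) set0; first by rewrite big_set0.
  rewrite (eq_bigr (fun f => y f - 2^-1)) => [|f]; last by rewrite inE /d => /andP [->].
  rewrite sumrB frac_edges_at_sum // sumr_const (frac_edges_at_tight_deg2 nv).2.
  by rewrite mulr2n -mulr2n -[_ *+ 2]mulr_natr mulVf ?pnatr_eq0 ?subrr.
by rewrite /d => + eF; rewrite eF => /eqP; rewrite subr_eq0 => /eqP.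
Qed.

Lemma frac_edges_two_regular : two_regular F.
Proof.
split=> [e eF | v nv]; last exact: (frac_edges_at_tight_deg2 nv).2.
exact/E_simple/(subsetP frac_edges_sub).
Qed.

(* An even cycle would carry the alternating direction +1, -1, ... *)
Lemma frac_edges_odd_cycles : disjoint_odd_cycles F.
Proof.
have [cs [cs_cyc cs_uniq FE]] := two_regular_cycle_decomposition frac_edges_two_regular.
exists cs; split=> //; apply/allP => c c_cs; have /andP [c_uniq c3] := allP cs_cyc c c_cs.
rewrite /odd_cycle_seq c_uniq c3 /=; apply: contraT => c_even.
have cF : cycle_edges c \subset F.
  by rewrite FE; apply/subsetP => e ec; rewrite (big_rem c) //= inE ec.
have [x0 _] : exists x0, x0 \in c by case: (c) c3 => [|a t] //; exists a; rewrite inE eqxx.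
have alt_adm : admissible E blossom y (alt_vector R x0 c).
  split=> [e eNF | v _]; last exact: alt_vector_deg (subset_trans cF frac_edges_sub).
  by apply: alt_vector_out; apply: contra eNF; apply: (subsetP cF).
have := y_ext alt_adm (cycle_edge x0 c 0).
have c0 : (0 < size c)%N by lia.
by rewrite alt_vector_edge // => /eqP; rewrite oner_eq0.
Qed.

Lemma half_edgesE : [set e in E | y e == 2^-1] = F.
Proof.
apply/setP => e; rewrite [RHS]inE in_set; case eE: (e \in E) => //=.
apply/eqP/idP => [->|eF]; last by apply: frac_half; rewrite inE eE.
by rewrite invr_gt0 ltr0n invf_lt1 ?ltr0n ?ltr1n.
Qed.

Lemma extreme_half_integral e : e \in E -> y e \in [:: 0; 2^-1; 1].
Proof.
move=> eE; have [eF|eNF] := boolP (e \in F); first by rewrite frac_half // !inE eqxx orbT.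
by rewrite (value_off_frac eE eNF); case: (_ == _); rewrite !inE eqxx ?orbT.
Qed.

End ExtremePoint.

Section Optimum.
Variables (R : realType) (V : finType) (E : {set {set V}}) (blossom : {set V}).
Variable w : {set V} -> R.
Hypothesis E_simple : simple_graph E.

Local Notation feasible := (lp_feasible E blossom).
Local Notation cost := (lp_cost E w).

Definition structured (x : {set V} -> R) :=
  [/\ feasible x, forall e, e \in E -> x e \in [:: 0; 2^-1; 1]
    & disjoint_odd_cycles [set e in E | x e == 2^-1]].

Lemma structured_below y : feasible y -> exists2 x, structured x & cost x <= cost y.
Proof.
move=> y_feas; have [x [x_feas x_ext] cxy] := extreme_below w y_feas.
exists x => //; split=> //; first by move=> e /(extreme_half_integral E_simple x_feas x_ext).
by rewrite (half_edgesE E_simple x_feas x_ext); exact: (frac_edges_odd_cycles E_simple x_feas x_ext).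
Qed.

Lemma structured_eq_on (x1 x2 : {set V} -> R) : (forall e, e \in E -> x1 e = x2 e) ->
  structured x1 -> structured x2 /\ cost x1 = cost x2.
Proof.
move=> x12 [[x_nb x_b x_01] x_half x_odd].
have deg12 v : deg_sum E x1 v = deg_sum E x2 v.
  by apply: eq_bigr => e /andP [eE _]; rewrite x12.
split; last by apply: eq_bigr => e eE; rewrite x12.
split; first split.
- by move=> v vb; rewrite -deg12 x_nb.
- by move=> v vb; rewrite -deg12 x_b.
- by move=> e eE; rewrite -x12 ?x_01.
- by move=> e eE; rewrite -x12 ?x_half.
have -> : [set e in E | x2 e == 2^-1] = [set e in E | x1 e == 2^-1].
  by apply/setP => e; rewrite !inE; case eE: (e \in E); rewrite //= x12.
exact: x_odd.
Qed.

Definition half_value (i : 'I_3) : R := nth 0 [:: 0; 2^-1; 1] i.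

Lemma half_value_encode (x : {set V} -> R) : (forall e, e \in E -> x e \in [:: 0; 2^-1; 1]) ->
  exists g : {ffun {set V} -> 'I_3}, forall e, e \in E -> half_value (g e) = x e.
Proof.
move=> x_half; exists [ffun e => inord (index (x e) [:: 0; 2^-1; 1])] => e eE.
by rewrite ffunE /half_value inordK ?nth_index ?x_half // -[3%N]/(size [:: 0; 2^-1; 1 : R]) index_mem x_half.
Qed.

(* Structured points take finitely many values on E, so a cheapest one exists. *)
Lemma exists_cheapest_structured : (exists y : {set V} -> R, feasible y) ->
  exists2 x, structured x & forall x', structured x' -> cost x <= cost x'.
Proof.
move=> [y y_feas].
pose xg (g : {ffun {set V} -> 'I_3}) e := half_value (g e).
have encode x : structured x -> exists2 g, structured (xg g) & cost (xg g) = cost x.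
  move=> x_str; have [_ x_half _] := x_str; have [g gE] := half_value_encode x_half.
  have [g_str cg] := structured_eq_on (fun e eE => esym (gE e eE)) x_str.
  by exists g.
have [x0 x0_str _] := structured_below y_feas; have [g0 g0_str _] := encode _ x0_str.
have [g /asboolP g_str g_min] :=
  arg_minP (P := fun g => `[< structured (xg g) >]) (fun g => cost (xg g)) (asboolT g0_str).
exists (xg g) => // x' /encode [g' /asboolT g'_str <-]; exact: g_min.
Qed.

End Optimum.

Theorem theorem3 (R : realType) (V : finType) (E : {set {set V}})
  (blossom : {set V}) (w : {set V} -> R) :
  simple_graph E ->
  (exists y : {set V} -> R, lp_feasible E blossom y) ->
  exists xs : {set V} -> R,
    [/\ lp_optimal E blossom w xs,
        (forall e, e \in E -> xs e \in [:: 0; 2^-1; 1])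
      & disjoint_odd_cycles [set e in E | xs e == 2^-1]].
Proof.
move=> E_simple feasible_nonempty.
have [x [x_feas x_half x_odd] x_min] := exists_cheapest_structured w E_simple feasible_nonempty.
exists x; split=> //; split=> // y y_feas.
have [x' x'_str cx'y] := structured_below w E_simple y_feas.
exact: le_trans (x_min _ x'_str) cx'y.
Qed.
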